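(* Let $G$ be a connected threshold graph of order $n\ge 4$ and size $m$ with $n-1<m<\binom{n}{2}$, with $c$ type 1 vertices, backwards zero position sequence $(b_1,\ldots,b_z)$ and $F_1=\sum_{i=1}^z b_i^2$. Let $\xi\in\mathbb{R}$ be the greatest real root of \[P(x)=x^3-(c+1)x^2+\Big(c-\sum_{i=1}^z b_i\Big)x+\Big(c\sum_{i=1}^z b_i-F_1\Big).\] Then $\xi$ is a simple root of $P$ and $|\xi|>|\eta|$ for every other root $\eta$ of $P$.
   Context: A threshold graph is a simple graph whose vertices can be ordered $v_1,\ldots,v_n$ so that for each $2\le i\le n$, $v_i$ is either adjacent to all of $v_1,\ldots,v_{i-1}$ (then $a_i=1$) or to none of them (then $a_i=0$); by convention $a_1=1$. Vertex $v_i$ is of type 1 if $a_i=1$ and of type 0 if $a_i=0$; $c$ and $z$ are the numbers of type 1 and type 0 vertices (here $c\ge 3$, $z\ge 1$). The backwards zero position sequence $(b_1,\ldots,b_z)$ is defined by letting $b_i$ be the number of type 1 vertices appearing after the $i$-th type 0 vertex in the order $v_1,\ldots,v_n$; one has $1\le b_i\le c-1$. *)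

From mathcomp Require Import all_boot all_order all_algebra all_field.
Set Implicit Arguments. Unset Strict Implicit. Unset Printing Implicit Defensive.
Import Order.TTheory GRing.Theory Num.Theory.

(* A threshold graph on vertices v_1..v_n, represented by 'I_n (v_{i+1} = i),
   given by its creation sequence a : 'I_n -> bool (a i = true: type 1). *)

Definition thr_adj n (a : 'I_n -> bool) : rel 'I_n :=
  fun i j => if (i < j)%N then a j else if (j < i)%N then a i else false.

Definition thr_size n (a : 'I_n -> bool) : nat :=
  #|[set p : 'I_n * 'I_n | (p.1 < p.2)%N && thr_adj a p.1 p.2]|.

Definition thr_connected n (a : 'I_n -> bool) : Prop :=
  forall x y : 'I_n, connect (thr_adj a) x y.

Definition num_type1 n (a : 'I_n -> bool) : nat := #|[set i : 'I_n | a i]|.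

(* for a type 0 vertex i: number of type 1 vertices after it; the backwards
   zero position sequence is (bzp a i) for the type-0 i in increasing order *)
Definition bzp n (a : 'I_n -> bool) (i : 'I_n) : nat :=
  #|[set j : 'I_n | (i < j)%N && a j]|.

Definition sum_b n (a : 'I_n -> bool) : nat := \sum_(i : 'I_n | ~~ a i) bzp a i.
Definition F1 n (a : 'I_n -> bool) : nat := \sum_(i : 'I_n | ~~ a i) (bzp a i) ^ 2.

Local Open Scope ring_scope.
Definition thrP (c S F : nat) : {poly algC} :=
  'X^3 - (c.+1)%:R *: 'X^2 + ((c%:Z - S%:Z)%:~R) *: 'X
    + (((c * S)%N%:Z - F%:Z)%:~R)%:P.

From mathcomp Require Import all_boot all_order all_algebra all_field.
From mathcomp Require Import ring.
Set Implicit Arguments. Unset Strict Implicit. Unset Printing Implicit Defensive.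
Import Order.TTheory GRing.Theory Num.Theory.
Local Open Scope ring_scope.

(* Over the algebraic numbers write P = (X - xi)(X - u)(X - v).  Connectivity
   and a_1 = 1 give 0 < b_i < c for every type-0 vertex, hence
   0 < F1 < c * sum b_i, i.e. P(0) > 0 and P(c) = -F1 < 0.  A non-real u would
   have v = conj u, and the two sign conditions would then say xi < 0 and
   xi > c >= 0.  So all roots are real, and since xi is the largest one the
   sign conditions force v < 0 < u < c < xi, with -v = xi + u - c - 1 < xi. *)

Lemma closed_sum_mul_split (F : closedFieldType) (s t : F) :
  exists u v, u + v = s /\ u * v = t.
Proof.
(* u is a root of X^2 - s X + t. *)
have [u hu] := solve_monicpoly (fun i => if i == 0%N then - t else s) (isT : (0 < 2)%N).
exists u, (s - u); split; first by rewrite addrC subrK.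
rewrite mulrBr -expr2 hu !big_ord_recr big_ord0 /= expr0 expr1 mulr1 add0r.
by rewrite opprD opprK [u * s]mulrC addrC subrK.
Qed.

Lemma cubic_vieta (F : closedFieldType) (s1 s2 s3 x : F) :
  root ('X^3 - s1 *: 'X^2 + s2 *: 'X + s3%:P) x ->
  exists u v, [/\ x + u + v = s1, x * u + x * v + u * v = s2, x * u * v = - s3
    & 'X^3 - s1 *: 'X^2 + s2 *: 'X + s3%:P = ('X - x%:P) * ('X - u%:P) * ('X - v%:P)].
Proof.
(* u and v are the roots of the quotient of the cubic by X - x. *)
have [u [v [suv puv]]] := closed_sum_mul_split (s1 - x) (s2 - x * (s1 - x)).
rewrite /root !(hornerD, hornerN, hornerZ, hornerXn, hornerX, hornerC) => /eqP px.
have e1 : x + u + v = s1 by rewrite -addrA suv addrC subrK.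
have e2 : x * u + x * v + u * v = s2 by rewrite -mulrDr suv puv; ring.
have e3 : x * u * v = - s3.
  apply/eqP; rewrite -addr_eq0 -mulrA puv -px -suv -e1; apply/eqP; ring.
exists u, v; split => //.
rewrite -e1 -e2 -[s3]opprK -e3 -!mul_polyC !rmorphD !rmorphN !rmorphM /=; ring.
Qed.

Lemma conj_of_real_sum_mul (C : numClosedFieldType) (u v : C) :
  u + v \is Num.real -> u * v \is Num.real -> u \notin Num.real -> v = u^*.
Proof.
move=> sR pR uR.
have : (u^* - u) * (u^* - v) = 0.
  have -> : (u^* - u) * (u^* - v) = u^* ^+ 2 - (u + v)^* * u^* + (u * v)^*.
    by rewrite (conj_Creal sR) (conj_Creal pR); ring.
  rewrite -rmorphXn -rmorphM -rmorphB -rmorphD.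
  by rewrite (_ : _ - _ + _ = 0) ?rmorph0 //; ring.
move/eqP; rewrite mulf_eq0 !subr_eq0 => /orP[/eqP uu|/eqP //].
by move: uR; rewrite CrealE uu eqxx.
Qed.

Lemma cubic_other_root_real (C : numClosedFieldType) (c x u v : C) :
  0 <= c -> u + v \is Num.real -> u * v \is Num.real ->
  x * u * v < 0 -> (c - x) * (c - u) * (c - v) < 0 -> u \is Num.real.
Proof.
move=> c0 sR pR xuv Pc; apply/negPn/negP => uR.
have vu := conj_of_real_sum_mul sR pR uR.
have u0 : u != 0 by apply: contraNneq uR => ->; rewrite rpred0.
have cu : c - u != 0 by apply: contraNneq uR => /eqP; rewrite subr_eq0 => /eqP <-; rewrite ger0_real.
have uv_gt0 : 0 < u * v by rewrite vu -normCK exprn_gt0 // normr_gt0.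
have cuv_gt0 : 0 < (c - u) * (c - v).
  by rewrite vu -{2}(conj_Creal (ger0_real c0)) -rmorphB -normCK exprn_gt0 // normr_gt0.
rewrite -mulrA (pmulr_llt0 _ uv_gt0) in xuv.
rewrite -mulrA (pmulr_llt0 _ cuv_gt0) subr_lt0 in Pc.
by have := lt_trans (le_lt_trans c0 Pc) xuv; rewrite ltxx.
Qed.

Lemma mixed_sign_roots_bound (R : numDomainType) (c x u v : R) :
  0 <= c -> 0 < u -> v < 0 -> u <= x -> x + u + v = c + 1 ->
  (c - x) * (c - u) * (c - v) < 0 ->
  [/\ u < x, `|u| < `|x| & `|v| < `|x|].
Proof.
move=> c0 u0 v0 ux sum Pc.
have cR : c \is Num.real by rewrite ger0_real.
have uR : u \is Num.real by rewrite gtr0_real.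
have cv : 0 < c - v by rewrite subr_gt0 (lt_le_trans v0 c0).
rewrite (pmulr_llt0 _ cv) in Pc.
have uc : u < c.
  case: (real_ltgtP uR cR) Pc => // [cu|->]; last by rewrite subrr mulr0 ltxx.
  rewrite (nmulr_llt0 _ _) ?subr_lt0 // subr_gt0 => xc.
  by have := lt_le_trans (lt_trans xc cu) ux; rewrite ltxx.
have cx : c < x by move: Pc; rewrite (pmulr_llt0 _ _) ?subr_gt0 // subr_lt0.
have x0 : 0 < x by apply: lt_trans u0 (lt_trans uc cx).
split; first exact: lt_trans uc cx.
  by rewrite !gtr0_norm // (lt_trans uc cx).
rewrite ltr0_norm // gtr0_norm // -subr_gt0.
have -> : x - - v = c + 1 - u by rewrite -sum; ring.
by rewrite subr_gt0 (lt_trans uc) // ltrDl ltr01.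
Qed.

Lemma cubic_dominant_root (C : numClosedFieldType) (c x u v : C) :
  0 <= c -> x \is Num.real -> u + v \is Num.real -> u * v \is Num.real ->
  x + u + v = c + 1 -> x * u * v < 0 -> (c - x) * (c - u) * (c - v) < 0 ->
  (u \is Num.real -> u <= x) -> (v \is Num.real -> v <= x) ->
  [/\ u != x, v != x, `|u| < `|x| & `|v| < `|x|].
Proof.
move=> c0 xR sR pR sum xuv Pc ux vx.
have uR : u \is Num.real by apply: cubic_other_root_real xuv Pc.
have vR : v \is Num.real by rewrite -(addKr u v) rpredD ?rpredN.
have {ux vx} [ux vx] := (ux uR, vx vR).
have x0 : 0 < x.
  rewrite -(pmulrn_lgt0 _ (isT : (0 < 3)%N)) mulrS mulr2n addrA.
  rewrite (lt_le_trans _ (lerD (lerD (lexx x) ux) vx)) //.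
  by rewrite sum ltr_pwDr ?ltr01.
rewrite -mulrA (pmulr_rlt0 _ x0) in xuv.
have /orP[u0|u0] : (0 < u) || (u < 0).
  by rewrite -real_neqr_lt ?real0 //; apply: contraTneq xuv => <-; rewrite mul0r ltxx.
- have v0 : v < 0 by rewrite -(pmulr_rlt0 _ u0).
  have [ux' nu nv] := mixed_sign_roots_bound c0 u0 v0 ux sum Pc.
  by split; rewrite // lt_eqF // (lt_trans v0 x0).
- have v0 : 0 < v by rewrite -(nmulr_rlt0 _ u0).
  have sum' : x + v + u = c + 1 by rewrite -sum addrAC.
  have Pc' : (c - x) * (c - v) * (c - u) < 0 by rewrite mulrAC.
  have [vx' nv nu] := mixed_sign_roots_bound c0 v0 u0 vx sum' Pc'.
  by split; rewrite // lt_eqF // (lt_trans u0 x0).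
Qed.

Lemma horner_thrP_c (c S F : nat) : (thrP c S F).[c%:R] = - F%:R.
Proof.
by rewrite /thrP !(hornerD, hornerN, hornerZ, hornerXn, hornerX, hornerC); ring.
Qed.

Lemma thrP_dominant_root (c S F : nat) (xi : algC) :
  (0 < F)%N -> (F < c * S)%N -> xi \is Num.real -> root (thrP c S F) xi ->
  (forall r : algC, r \is Num.real -> root (thrP c S F) r -> r <= xi) ->
  ~~ ((('X - xi%:P) ^+ 2) %| thrP c S F) /\
  (forall eta : algC, root (thrP c S F) eta -> eta != xi -> `|eta| < `|xi|).
Proof.
move=> F0 FcS xR /cubic_vieta[u [v [sum pair prod fac]]] xi_max.
have {}fac : thrP c S F = ('X - xi%:P) * ('X - u%:P) * ('X - v%:P) := fac.
have rootE r : root (('X - xi%:P) * ('X - u%:P) * ('X - v%:P)) r = [|| r == xi, r == u | r == v].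
  by rewrite !rootM !root_XsubC orbA.
have suv : u + v = c.+1%:R - xi by rewrite -sum; ring.
have [nu nv ltu ltv] : [/\ u != xi, v != xi, `|u| < `|xi| & `|v| < `|xi|].
  apply: (cubic_dominant_root (c := c%:R)) => //.
  - by rewrite suv rpredB ?realn.
  - have -> : u * v = (c%:Z - S%:Z)%:~R - xi * (u + v) by rewrite -pair; ring.
    by rewrite suv rpredB ?rpredM ?rpredB ?realz ?realn.
  - by rewrite sum natr1.
  - by rewrite prod oppr_lt0 ltr0z subr_gt0 ltz_nat.
  - have := horner_thrP_c c S F; rewrite fac !hornerM !hornerXsubC => ->.
    by rewrite oppr_lt0 ltr0n.
  - by move=> uR; apply: xi_max uR _; rewrite fac rootE eqxx orbT.
  - by move=> vR; apply: xi_max vR _; rewrite fac rootE eqxx !orbT.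
split.
  rewrite fac -mulrA expr2 dvdp_mul2l ?polyXsubC_eq0 // dvdp_XsubCl rootM !root_XsubC.
  by rewrite !(eq_sym xi) (negbTE nu) (negbTE nv).
by move=> eta; rewrite fac rootE => /or3P[/eqP->|/eqP->|/eqP->]; rewrite ?eqxx.
Qed.

Lemma sum_sqr_lt_mul (I : finType) (P : pred I) (b : I -> nat) (c : nat) (i0 : I) :
  P i0 -> (forall i, P i -> 0 < b i < c)%N ->
  (0 < \sum_(i | P i) b i ^ 2 < c * \sum_(i | P i) b i)%N.
Proof.
move=> Pi0 bP; have /andP[b0 bc] := bP i0 Pi0.
rewrite big_distrr /= (bigD1 (F := fun i => (b i ^ 2)%N) i0 Pi0).
rewrite (bigD1 (F := fun i => (c * b i)%N) i0 Pi0) /=.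
rewrite ltn_addr ?expn_gt0 ?b0 //= -addSn leq_add //.
  by rewrite -mulnn ltn_pmul2r.
apply: leq_sum => i /andP[Pi _]; have /andP[_ /ltnW bic] := bP i Pi.
by rewrite -mulnn leq_mul2r bic orbT.
Qed.

Lemma thr_size_complete n (a : 'I_n -> bool) : (forall i, a i) -> thr_size a = 'C(n, 2).
Proof.
move=> all1; rewrite /thr_size.
have -> : [set p : 'I_n * 'I_n | (p.1 < p.2)%N && thr_adj a p.1 p.2] =
          [set p : 'I_n * 'I_n | (p.1 < p.2)%N].
  by apply/setP => p; rewrite !inE /thr_adj; case: ifP; rewrite ?all1.
rewrite cardsE -sum1_card.
transitivity (\sum_(i < n) \sum_(j < n | (i < j)%N) 1)%N.
  by rewrite pair_big_dep /=; apply: eq_bigl => p.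
rewrite (exchange_big_dep xpredT) //= -[RHS]bin2_sum big_mkord.
apply: eq_bigr => j _.
rewrite -(big_ord_widen n (fun _ => 1%N) (ltnW (ltn_ord j))).
by rewrite sum1_card card_ord.
Qed.

Lemma thr_connected_last_type1 n (a : 'I_n -> bool) (i : 'I_n) :
  (1 < n)%N -> thr_connected a -> val i = n.-1 -> a i.
Proof.
move=> n1 conn ilast.
have [j ij] : exists j : 'I_n, j != i.
  by exists (Ordinal (ltnW n1)); rewrite -val_eqE /= ilast eq_sym -lt0n ltn_predRL.
have /connectP[[|y p] /= path_iy jlast] := conn i j; first by rewrite jlast eqxx in ij.
case/andP: path_iy => iy _.
have yi : (y <= i)%N by rewrite ilast -ltnS (prednK (ltnW n1)).
by move: iy; rewrite /thr_adj ltnNge yi /=; case: ifP.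
Qed.

Lemma bzp_bounds n (a : 'I_n -> bool) (i : 'I_n) :
  (1 < n)%N -> (forall j : 'I_n, val j = 0%N -> a j) -> thr_connected a -> ~~ a i ->
  (0 < bzp a i < num_type1 a)%N.
Proof.
move=> n1 a_first conn ai.
have n0 : (0 < n)%N := ltnW n1.
have ltn_last : (n.-1 < n)%N by rewrite prednK.
have a_last : a (Ordinal ltn_last) by apply: thr_connected_last_type1.
have i_gt0 : (0 < i)%N by rewrite lt0n; apply: contraNneq ai; apply: a_first.
have i_lt_last : (i < n.-1)%N.
  rewrite ltn_neqAle -ltnS prednK // ltn_ord andbT.
  by apply: contraNneq ai; apply: thr_connected_last_type1.
apply/andP; split; first by apply/card_gt0P; exists (Ordinal ltn_last); rewrite inE i_lt_last.
apply/proper_card/properP; split; first by apply/subsetP => j; rewrite !inE => /andP[].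
by exists (Ordinal n0); rewrite !inE ?a_first // ltnNge ltnW.
Qed.

Theorem lemma5p4 (n : nat) (a : 'I_n -> bool) (xi : algC) :
  (4 <= n)%N ->
  (forall i : 'I_n, val i = 0%N -> a i) ->
  thr_connected a ->
  (n.-1 < thr_size a)%N -> (thr_size a < 'C(n, 2))%N ->
  xi \is Num.real ->
  root (thrP (num_type1 a) (sum_b a) (F1 a)) xi ->
  (forall r : algC, r \is Num.real ->
     root (thrP (num_type1 a) (sum_b a) (F1 a)) r -> r <= xi) ->
  ~~ ((('X - xi%:P) ^+ 2) %| thrP (num_type1 a) (sum_b a) (F1 a)) /\
  (forall eta : algC, root (thrP (num_type1 a) (sum_b a) (F1 a)) eta ->
     eta != xi -> `|eta| < `|xi|).
Proof.
move=> n4 a_first conn _ not_complete xR xi_root xi_max.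
have n1 : (1 < n)%N by apply: leq_trans n4.
have [i0 ai0] : exists i0, ~~ a i0.
  apply/existsP; apply: contraLR not_complete; rewrite negb_exists => /forallP all1.
  by rewrite thr_size_complete ?ltnn // => i; apply/negPn/all1.
have /andP[F1_gt0 F1_lt] :=
  sum_sqr_lt_mul (P := fun i => ~~ a i) ai0 (fun i => @bzp_bounds _ _ i n1 a_first conn).
exact: thrP_dominant_root.
Qed.
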